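(* Let $(G,\vdash,\dashv)$ be a digroup with distinguished bar-unit $1$, let $E\subset G$ be the set of bar-units and $J\le G$ the group of inverses $\{x^{-1}:x\in G\}$, and let $x\circ y:=x\vdash y\dashv x^{-1}$. Then $G$ is isomorphic to the digroup $(E\times J,\vdash,\dashv)$ whose operations are defined by $$(u,h)\vdash(v,k)=(h\circ v,\ h\vdash k),\qquad (u,h)\dashv(v,k)=(u,\ h\dashv k)$$ for $u,v\in E$, $h,k\in J$.
   Context: A digroup $(G,\vdash,\dashv)$ is a set with two binary operations such that (G1) $(G,\vdash)$ and $(G,\dashv)$ are semigroups; (G2) $x\vdash(y\dashv z)=(x\vdash y)\dashv z$; (G3) $x\dashv(y\vdash z)=x\dashv(y\dashv z)$; (G4) $(x\dashv y)\vdash z=(x\vdash y)\vdash z$; (G5) there is a distinguished $1\in G$ with $1\vdash x=x\dashv 1=x$ for all $x$; (G6) every $x$ has $x^{-1}$ with $x\vdash x^{-1}=x^{-1}\dashv x=1$. A bar-unit is an $e$ with $e\vdash x=x\dashv e=x$ for all $x$. An isomorphism of digroups is a bijection preserving both operations. *)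

Set Implicit Arguments.

Definition is_digroup (G : Type) (vd dv : G -> G -> G) (one : G) (inv : G -> G) : Prop :=
  (forall x y z, vd x (vd y z) = vd (vd x y) z) /\
  (forall x y z, dv x (dv y z) = dv (dv x y) z) /\
  (forall x y z, vd x (dv y z) = dv (vd x y) z) /\
  (forall x y z, dv x (vd y z) = dv x (dv y z)) /\
  (forall x y z, vd (dv x y) z = vd (vd x y) z) /\
  (forall x, vd one x = x /\ dv x one = x) /\
  (forall x, vd x (inv x) = one /\ dv (inv x) x = one).

Definition bar_unit (G : Type) (vd dv : G -> G -> G) (e : G) : Prop :=
  forall x, vd e x = x /\ dv x e = x.

Definition in_J (G : Type) (inv : G -> G) (h : G) : Prop :=
  exists x, h = inv x.

Definition circ (G : Type) (vd dv : G -> G -> G) (inv : G -> G) (x y : G) : G :=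
  vd x (dv y (inv x)).

(* operations on E x J, carried on G * G *)
Definition pvd (G : Type) (vd dv : G -> G -> G) (inv : G -> G) (p q : G * G) : G * G :=
  (circ vd dv inv (snd p) (fst q), vd (snd p) (snd q)).
Definition pdv (G : Type) (dv : G -> G -> G) (p q : G * G) : G * G :=
  (fst p, dv (snd p) (snd q)).


Set Implicit Arguments.

(* Every x factors as x = (x -| x^-1) -| (1 -| x), where x -| x^-1 is a bar-unit
   and 1 -| x = (x^-1)^-1 lies in J (the elements fixed by 1 -| _); conversely,
   for a bar-unit u and k in J these two parts of u -| k are u and k.  Hence
   x |-> (x -| x^-1, 1 -| x) is a bijection onto E x J, and it is a morphism since
   x -| y = (x -| x^-1) -| ((1 -| x) -| (1 -| y)) and
   x |- y = (h o v) -| (h |- k) for h = 1 -| x, v = y -| y^-1, k = 1 -| y,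
   where h o v, a conjugate of the bar-unit v, is again a bar-unit. *)

Section Digroup.

Variables (G : Type) (vd dv : G -> G -> G) (one : G) (inv : G -> G).

Local Infix "⊢" := vd (at level 40, left associativity).
Local Infix "⊣" := dv (at level 40, left associativity).

Hypothesis vdA : forall x y z, x ⊢ (y ⊢ z) = x ⊢ y ⊢ z.
Hypothesis dvA : forall x y z, x ⊣ (y ⊣ z) = x ⊣ y ⊣ z.
Hypothesis vd_dvA : forall x y z, x ⊢ (y ⊣ z) = x ⊢ y ⊣ z.
Hypothesis dv_vdr : forall x y z, x ⊣ (y ⊢ z) = x ⊣ (y ⊣ z).
Hypothesis dv_vdl : forall x y z, (x ⊣ y) ⊢ z = x ⊢ y ⊢ z.
Hypothesis one_bar_unit : bar_unit vd dv one.
Hypothesis vd_inv : forall x, x ⊢ inv x = one.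
Hypothesis inv_dv : forall x, inv x ⊣ x = one.

Lemma vd1x x : one ⊢ x = x.
Proof. apply one_bar_unit. Qed.

Lemma dvx1 x : x ⊣ one = x.
Proof. apply one_bar_unit. Qed.

Lemma dv1_idem x : one ⊣ (one ⊣ x) = one ⊣ x.
Proof. now rewrite dvA, dvx1. Qed.

Lemma dv_dv1 x y : x ⊣ (one ⊣ y) = x ⊣ y.
Proof. now rewrite <- dv_vdr, vd1x. Qed.

Lemma vdx1 x : x ⊢ one = one ⊣ x.
Proof.
  transitivity (x ⊢ (inv x ⊣ x)); [now rewrite inv_dv |].
  now rewrite vd_dvA, vd_inv.
Qed.

Lemma dv1_vd x y : (one ⊣ x) ⊢ y = x ⊢ y.
Proof. now rewrite dv_vdl, vd1x. Qed.

Lemma inv_invE x : inv (inv x) = one ⊣ x.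
Proof.
  transitivity (inv (inv x) ⊣ (inv x ⊣ x)); [now rewrite inv_dv, dvx1 |].
  now rewrite dvA, inv_dv.
Qed.

Lemma dv1_inv x : one ⊣ inv x = inv x.
Proof. now rewrite <- (inv_dv x), <- dvA, <- dv_vdr, vd_inv, dvx1. Qed.

Lemma in_J_iff k : in_J inv k <-> one ⊣ k = k.
Proof.
  split.
  - intros [x ->]. apply dv1_inv.
  - intros Hk. exists (inv k). now rewrite inv_invE.
Qed.

Lemma dv1_dv1 x y : one ⊣ (one ⊣ x ⊣ y) = one ⊣ x ⊣ y.
Proof. now rewrite dvA, dv1_idem. Qed.

Lemma vd_fixed k x : one ⊣ k = k -> x ⊢ k = one ⊣ x ⊣ k.
Proof.
  intros Hk. transitivity (x ⊢ (one ⊣ k)); [now rewrite Hk |].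
  now rewrite vd_dvA, vdx1.
Qed.

Lemma dv_inv_vd h k : inv h ⊣ (h ⊢ k) = one ⊣ k.
Proof. now rewrite dv_vdr, dvA, inv_dv. Qed.

Lemma bar_unit_dv_inv x : bar_unit vd dv (x ⊣ inv x).
Proof.
  intros w. split.
  - now rewrite dv_vdl, vd_inv, vd1x.
  - now rewrite <- dv_vdr, vd_inv, dvx1.
Qed.

Lemma bar_unit_circ h v : bar_unit vd dv v -> bar_unit vd dv (circ vd dv inv h v).
Proof.
  intros Hv w. unfold circ. split.
  - rewrite vd_dvA, dv_vdl, <- !vdA, (proj1 (Hv _)), vdA, vd_inv.
    apply vd1x.
  - rewrite dv_vdr, !dvA, (proj2 (Hv _)), <- dvA, <- dv_vdr, vd_inv.
    apply dvx1.
Qed.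

Lemma dv1_bar_unit u k : bar_unit vd dv u -> one ⊣ (u ⊣ k) = one ⊣ k.
Proof. intros Hu. now rewrite dvA, (proj2 (Hu one)). Qed.

Lemma dv_inv_bar_unit u k :
  bar_unit vd dv u -> one ⊣ k = k -> u ⊣ k ⊣ inv (u ⊣ k) = u.
Proof.
  intros Hu Hk.
  assert (vd_k : k ⊢ inv (u ⊣ k) = one).
  { now rewrite <- (vd_inv (u ⊣ k)), dv_vdl, (proj1 (Hu k)). }
  assert (dv_k : k ⊣ inv (u ⊣ k) = one).
  { now rewrite <- vd_k, vd_fixed, Hk by apply dv1_inv. }
  now rewrite <- dvA, dv_k, dvx1.
Qed.

Definition digroup_split (x : G) : G * G := (x ⊣ inv x, one ⊣ x).

Lemma digroup_split_dv u k :
  bar_unit vd dv u -> one ⊣ k = k -> digroup_split (u ⊣ k) = (u, k).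
Proof.
  intros Hu Hk. unfold digroup_split.
  rewrite dv_inv_bar_unit, dv1_bar_unit, Hk by assumption.
  reflexivity.
Qed.

Lemma digroup_factorization x : x ⊣ inv x ⊣ (one ⊣ x) = x.
Proof. now rewrite dv_dv1, <- dvA, inv_dv, dvx1. Qed.

Lemma digroup_split_range x :
  bar_unit vd dv (fst (digroup_split x)) /\ in_J inv (snd (digroup_split x)).
Proof. split; [apply bar_unit_dv_inv | apply in_J_iff, dv1_idem]. Qed.

Lemma digroup_split_inj x y : digroup_split x = digroup_split y -> x = y.
Proof.
  intros Hxy. injection Hxy as Hu Hk.
  now rewrite <- (digroup_factorization x), <- (digroup_factorization y), Hu, Hk.
Qed.

Lemma digroup_split_onto u h :
  bar_unit vd dv u -> in_J inv h -> exists x, digroup_split x = (u, h).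
Proof.
  intros Hu Hh. exists (u ⊣ h).
  now apply digroup_split_dv, in_J_iff.
Qed.

Lemma digroup_split_dvM x y :
  digroup_split (x ⊣ y) = pdv dv (digroup_split x) (digroup_split y).
Proof.
  assert (Exy : x ⊣ y = x ⊣ inv x ⊣ (one ⊣ x ⊣ (one ⊣ y))).
  { now rewrite dvA, (digroup_factorization x), dv_dv1. }
  rewrite Exy. apply digroup_split_dv.
  - apply bar_unit_dv_inv.
  - apply dv1_dv1.
Qed.

Lemma vd_circ_decomposition x y :
  x ⊢ y = circ vd dv inv (one ⊣ x) (y ⊣ inv y) ⊣ ((one ⊣ x) ⊢ (one ⊣ y)).
Proof.
  unfold circ.
  rewrite vd_dvA, <- dvA, dv_inv_vd, dv1_idem, <- vd_dvA, dv1_vd.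
  f_equal. symmetry. apply (digroup_factorization y).
Qed.

Lemma digroup_split_vdM x y :
  digroup_split (x ⊢ y) = pvd vd dv inv (digroup_split x) (digroup_split y).
Proof.
  rewrite vd_circ_decomposition. apply digroup_split_dv.
  - apply bar_unit_circ, bar_unit_dv_inv.
  - rewrite vd_fixed by apply dv1_idem. apply dv1_dv1.
Qed.

End Digroup.

Theorem theorem4p8 (G : Type) (vd dv : G -> G -> G) (one : G) (inv : G -> G) :
  is_digroup vd dv one inv ->
  exists f : G -> G * G,
    (* f is a bijection from G onto E x J *)
    (forall x, bar_unit vd dv (fst (f x)) /\ in_J inv (snd (f x))) /\
    (forall x y, f x = f y -> x = y) /\
    (forall u h, bar_unit vd dv u -> in_J inv h -> exists x, f x = (u, h)) /\
    (* f preserves both operations *)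
    (forall x y, f (vd x y) = pvd vd dv inv (f x) (f y)) /\
    (forall x y, f (dv x y) = pdv dv (f x) (f y)).
Proof.
  intros (vdA & dvA & vd_dvA & dv_vdr & dv_vdl & one_bar_unit & inverse).
  assert (vd_inv : forall x, vd x (inv x) = one) by apply inverse.
  assert (inv_dv : forall x, dv (inv x) x = one) by apply inverse.
  exists (digroup_split dv one inv).
  split; [| split; [| split; [| split]]].
  - intros x. now apply digroup_split_range.
  - intros x y. now apply digroup_split_inj with (vd := vd).
  - intros u h. now apply digroup_split_onto.
  - intros x y. now apply digroup_split_vdM.
  - intros x y. now apply digroup_split_dvM with (vd := vd).
Qed.
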